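(* There exists a constant $C>0$ such that for all integers $n\ge2$, $g\ge1$ with $\theta:=g/n\ge x^{-2/3}$, where $x:=n+g$, \[\Big|\beta(n,g)-e^{-f'(\theta)}-\frac{e^{-f'(\theta)}}{n}\Big(\frac{f''(\theta)}{2}-j'(\theta)\Big)\Big|\le C\,x^{-4/3}.\]
   Context: Define $\lambda:[0,\infty)\to(0,1/4]$ by $\lambda(0)=1/4$ and, for $\theta>0$, $\lambda(\theta)$ is the unique $\lambda\in(0,1/4)$ with $-1+\frac{\operatorname{artanh}(\sqrt{1-4\lambda})}{\sqrt{1-4\lambda}}=\theta$. For $\theta>0$ set $f(\theta)=-\ln\lambda(\theta)-2\theta-\theta\ln(1-4\lambda(\theta))$ and $j(\theta)=-\tfrac12\ln(1-4(\theta+1)\lambda(\theta))+\tfrac12\ln 2$. For integers $n\ge1$, $g\ge1$ let \[\Omega(n,g)=\frac{\sqrt g\,g^g}{\sqrt{2\pi}\,e^g\,g!}\,n^{2g-2}\exp\!\Big(nf\big(\tfrac gn\big)+j\big(\tfrac gn\big)\Big),\qquad \Omega(n,0)=\frac{4^n n^{-3/2}}{\sqrt{2\pi}},\] and for $n\ge2$, $g\ge1$ let $\beta(n,g)=n^2\frac{\Omega(n,g-1)}{\Omega(n,g)}$. *)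

From Stdlib Require Import Reals ClassicalEpsilon.
From Coquelicot Require Import Coquelicot.
Open Scope R_scope.

Definition artanh (y : R) : R := / 2 * ln ((1 + y) / (1 - y)).

Definition lam_spec (theta l : R) : Prop :=
  0 < l < / 4 /\
  -1 + artanh (sqrt (1 - 4 * l)) / sqrt (1 - 4 * l) = theta.

(* lambda(theta): lambda(0) = 1/4; for theta > 0 the (unique) solution of
   lam_spec in (0,1/4).  Values for theta < 0 are irrelevant (set to 1/4). *)
Definition lam (theta : R) : R :=
  match Rlt_dec 0 theta with
  | left _ => epsilon (inhabits (/ 4)) (lam_spec theta)
  | right _ => / 4
  end.

Definition f_th (theta : R) : R :=
  - ln (lam theta) - 2 * theta - theta * ln (1 - 4 * lam theta).

Definition j_th (theta : R) : R :=
  - / 2 * ln (1 - 4 * (theta + 1) * lam theta) + / 2 * ln 2.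

Definition Omega (n g : nat) : R :=
  match g with
  | O => 4 ^ n * Rpower (INR n) (- (3 / 2)) / sqrt (2 * PI)
  | S _ =>
      let th := INR g / INR n in
      sqrt (INR g) * INR g ^ g / (sqrt (2 * PI) * exp (INR g) * INR (Factorial.fact g))
      * INR n ^ (2 * g - 2) * exp (INR n * f_th th + j_th th)
  end.

Definition beta (n g : nat) : R := INR n ^ 2 * Omega n (g - 1) / Omega n g.

(* Write theta = artanh s / s - 1 with s = sqrt (1 - 4 lambda(theta)) in (0, 1). Then
   exp (- f'(theta)) = s^2, and f'', f''', j', j'' are explicit functions of s for which
   theta |f''|, theta |j'|, theta^2 |f'''| and theta^2 |j''| stay bounded: for small s one has
   theta ~ s^2 / 3, and near s = 1 one has theta ~ artanh s while (1 - s^2) artanh^k s is bounded.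
   For g >= 2 the Stirling factors give
     beta(n, g) = exp (L(g) + n (f(theta - 1/n) - f(theta)) + j(theta - 1/n) - j(theta))
   with L(g) = 1 + (g - 1/2) ln (1 - 1/g) = O(g^-2). Since theta - 1/n >= theta / 2, Taylor
   expansion of f to third and of j to second order turns the exponent into
   - f'(theta) + a / n + O(g^-2) with a = f''(theta) / 2 - j'(theta) = O(1 / theta), so a / n = O(1/g),
   and expanding the exponential leaves an error O(s^2 / g^2). Finally s^2 = O(min (1, theta)) and
   theta >= x^(-2/3) give s^2 / g^2 = O(x^(-4/3)). For g = 1 the hypothesis only admits n = 2,
   a single case absorbed into the constant. *)

From Stdlib Require Import Reals Lra Lia Ranalysis5 ClassicalEpsilon.
From Coquelicot Require Import Coquelicot.
Open Scope R_scope.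

Ltac solve_nonzero :=
  match goal with
  | |- ?a <> 0 => first [apply Rgt_not_eq; unfold Rgt; (lra || nra) | apply Rlt_not_eq; (lra || nra)]
  end.
Ltac field_side := repeat match goal with |- _ /\ _ => split end; try solve_nonzero; try lra.

Lemma is_derive_mvt (f df : R -> R) a b : a <= b ->
  (forall t, a <= t <= b -> is_derive f t (df t)) ->
  exists c, a <= c <= b /\ f b - f a = df c * (b - a).
Proof.
  intros Hab Hd. destruct (Req_dec a b) as [<-|Hne].
  - exists a. split; [lra|ring].
  - destruct (MVT_cor3 f df a b) as [c [Hac [Hcb E]]]; [lra| |].
    + intros t Hat Htb. apply is_derive_Reals, Hd. lra.
    + exists c. split; [lra|]. rewrite E. ring.
Qed.

Lemma le_of_is_derive_nonneg (f df : R -> R) a b : a <= b ->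
  (forall t, a <= t <= b -> is_derive f t (df t)) ->
  (forall t, a <= t <= b -> 0 <= df t) -> f a <= f b.
Proof.
  intros Hab Hd Hp. destruct (is_derive_mvt f df a b Hab Hd) as [c [Hc E]].
  assert (0 <= df c * (b - a)) by (apply Rmult_le_pos; [apply Hp|]; lra). lra.
Qed.

Lemma lt_of_is_derive_pos (f df : R -> R) a b : a < b ->
  (forall t, a <= t <= b -> is_derive f t (df t)) ->
  (forall t, a <= t <= b -> 0 < df t) -> f a < f b.
Proof.
  intros Hab Hd Hp. destruct (is_derive_mvt f df a b (Rlt_le _ _ Hab) Hd) as [c [Hc E]].
  assert (0 < df c * (b - a)) by (apply Rmult_lt_0_compat; [apply Hp|]; lra). lra.
Qed.

Lemma Rabs_sub_le_of_is_derive (f df : R -> R) a b M : a <= b ->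
  (forall t, a <= t <= b -> is_derive f t (df t)) ->
  (forall t, a <= t <= b -> Rabs (df t) <= M) -> Rabs (f b - f a) <= M * (b - a).
Proof.
  intros Hab Hd Hb. destruct (is_derive_mvt f df a b Hab Hd) as [c [Hc ->]].
  rewrite Rabs_mult, (Rabs_right (b - a)) by lra.
  apply Rmult_le_compat_r; [lra|]. apply Hb. exact Hc.
Qed.

(* [is_derive_unique] at type [R -> R], so that it rewrites the [Derive] terms left by [auto_derive]. *)
Lemma Derive_of_is_derive (f : R -> R) x l : is_derive f x l -> Derive f x = l.
Proof. apply is_derive_unique. Qed.

Lemma taylor1_remainder_le (f f1 f2 : R -> R) a b M : a <= b ->
  (forall t, a <= t <= b -> is_derive f t (f1 t)) ->
  (forall t, a <= t <= b -> is_derive f1 t (f2 t)) ->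
  (forall t, a <= t <= b -> Rabs (f2 t) <= M) ->
  Rabs (f a - f b + (b - a) * f1 b) <= M * (b - a) ^ 2.
Proof.
  intros Hab D1 D2 B.
  assert (HM : 0 <= M) by (apply Rle_trans with (Rabs (f2 a)); [apply Rabs_pos | apply B; lra]).
  assert (H := Rabs_sub_le_of_is_derive (fun t => f t - t * f1 b) (fun t => f1 t - f1 b)
                 a b (M * (b - a)) Hab).
  replace (f a - f b + (b - a) * f1 b) with (- (f b - b * f1 b - (f a - a * f1 b))) by ring.
  rewrite Rabs_Ropp. replace (M * (b - a) ^ 2) with (M * (b - a) * (b - a)) by ring.
  apply H.
  - intros t Ht. auto_derive.
    + exists (f1 t). apply D1. exact Ht.
    + rewrite (Derive_of_is_derive (fun x => f x) t (f1 t)) by (apply D1; exact Ht). ring.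
  - intros t Ht. rewrite Rabs_minus_sym.
    apply Rle_trans with (M * (b - t)); [|apply Rmult_le_compat_l; lra].
    apply (Rabs_sub_le_of_is_derive f1 f2); try lra; intros u Hu; [apply D2 | apply B]; lra.
Qed.

Lemma taylor2_remainder_le (f f1 f2 f3 : R -> R) a b M : a <= b ->
  (forall t, a <= t <= b -> is_derive f t (f1 t)) ->
  (forall t, a <= t <= b -> is_derive f1 t (f2 t)) ->
  (forall t, a <= t <= b -> is_derive f2 t (f3 t)) ->
  (forall t, a <= t <= b -> Rabs (f3 t) <= M) ->
  Rabs (f a - f b + (b - a) * f1 b - (b - a) ^ 2 / 2 * f2 b) <= M * (b - a) ^ 3.
Proof.
  intros Hab D1 D2 D3 B.
  assert (HM : 0 <= M) by (apply Rle_trans with (Rabs (f3 a)); [apply Rabs_pos | apply B; lra]).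
  assert (H := Rabs_sub_le_of_is_derive (fun t => f t - t * f1 b - (t - b) ^ 2 / 2 * f2 b)
                 (fun t => f1 t - f1 b + (b - t) * f2 b) a b (M * (b - a) ^ 2) Hab).
  replace (f a - f b + (b - a) * f1 b - (b - a) ^ 2 / 2 * f2 b) with
    (- (f b - b * f1 b - (b - b) ^ 2 / 2 * f2 b - (f a - a * f1 b - (a - b) ^ 2 / 2 * f2 b))) by field.
  rewrite Rabs_Ropp. replace (M * (b - a) ^ 3) with (M * (b - a) ^ 2 * (b - a)) by ring.
  apply H.
  - intros t Ht. auto_derive.
    + exists (f1 t). apply D1. exact Ht.
    + rewrite (Derive_of_is_derive (fun x => f x) t (f1 t)) by (apply D1; exact Ht). field.
  - intros t Ht.
    apply Rle_trans with (M * (b - t) ^ 2); [|apply Rmult_le_compat_l; [lra|apply pow_incr; lra]].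
    apply (taylor1_remainder_le f1 f2 f3); try lra; intros u Hu; [apply D2 | apply D3 | apply B]; lra.
Qed.

Lemma exp_le_compat x y : x <= y -> exp x <= exp y.
Proof. intros [Hlt | ->]; [left; apply exp_increasing; exact Hlt | right; reflexivity]. Qed.

(* Taylor expansion of [t |-> exp (- t * z)] at [0], evaluated at [-1]. *)
Lemma Rabs_exp_sub_1_sub_le z Z : Rabs z <= Z -> Rabs (exp z - 1 - z) <= exp Z * z ^ 2.
Proof.
  intro Hz.
  assert (H := taylor1_remainder_le (fun t => exp (- t * z)) (fun t => - z * exp (- t * z))
                 (fun t => z ^ 2 * exp (- t * z)) (-1) 0 (exp Z * z ^ 2) ltac:(lra)).
  cbv beta in H.
  replace (- -1 * z) with z in H by ring. replace (- 0 * z) with 0 in H by ring.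
  rewrite exp_0 in H. replace (exp z - 1 - z) with (exp z - 1 + (0 - -1) * (- z * 1)) by ring.
  replace (exp Z * z ^ 2) with (exp Z * z ^ 2 * (0 - -1) ^ 2) by ring.
  apply H.
  - intros t _. auto_derive; [easy | ring].
  - intros t _. auto_derive; [easy | ring].
  - intros t Ht. rewrite Rabs_right by (apply Rle_ge, Rmult_le_pos; [apply pow2_ge_0 | apply Rlt_le, exp_pos]).
    rewrite Rmult_comm. apply Rmult_le_compat_r; [apply pow2_ge_0|].
    apply exp_le_compat. pose proof (Rle_abs z). pose proof (Rabs_pos z). nra.
Qed.

Lemma Rabs_ln_1_sub_le y : 0 <= y <= 1 / 2 -> Rabs (ln (1 - y) + y + y ^ 2 / 2) <= 2 * y ^ 3.
Proof.
  intro Hy.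
  assert (H := Rabs_sub_le_of_is_derive (fun t => ln (1 - t) + t + t ^ 2 / 2)
                 (fun t => - (t ^ 2 / (1 - t))) 0 y (2 * y ^ 2) ltac:(lra)).
  cbv beta in H. rewrite Rminus_0_r, ln_1 in H.
  replace (ln (1 - y) + y + y ^ 2 / 2) with (ln (1 - y) + y + y ^ 2 / 2 - (0 + 0 + 0 ^ 2 / 2)) by field.
  replace (2 * y ^ 3) with (2 * y ^ 2 * (y - 0)) by ring.
  apply H.
  - intros t Ht. auto_derive; [lra | field; lra].
  - intros t Ht. rewrite Rabs_Ropp, Rabs_right by (apply Rle_ge, Rdiv_le_0_compat; nra).
    apply (Rmult_le_reg_r (1 - t)); [lra|].
    replace (t ^ 2 / (1 - t) * (1 - t)) with (t ^ 2) by (field; lra). nra.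
Qed.

Lemma Rmult3_le_compat a b c a' b' c' :
  0 <= a <= a' -> 0 <= b <= b' -> 0 <= c <= c' -> a * b * c <= a' * b' * c'.
Proof.
  intros Ha Hb Hc. apply Rmult_le_compat; try lra.
  - apply Rmult_le_pos; lra.
  - apply Rmult_le_compat; lra.
Qed.

(** * Inequalities for artanh *)

Lemma artanh_0 : artanh 0 = 0.
Proof. unfold artanh. replace ((1 + 0) / (1 - 0)) with 1 by field. rewrite ln_1. ring. Qed.

Lemma is_derive_artanh t : -1 < t < 1 -> is_derive artanh t (/ (1 - t ^ 2)).
Proof.
  intro Ht. unfold artanh. auto_derive.
  - repeat split; try lra. apply Rdiv_lt_0_compat; lra.
  - field. field_side.
Qed.

Lemma artanh_ge s : 0 <= s < 1 -> s + s ^ 3 / 3 <= artanh s.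
Proof.
  intro Hs.
  assert (H := le_of_is_derive_nonneg (fun t => artanh t - t - t ^ 3 / 3)
                 (fun t => t ^ 4 / (1 - t ^ 2)) 0 s).
  cbv beta in H. rewrite artanh_0 in H.
  enough (0 - 0 - 0 ^ 3 / 3 <= artanh s - s - s ^ 3 / 3) by lra. apply H.
  - lra.
  - intros t Ht. unfold artanh. auto_derive.
    + repeat split; try lra. apply Rdiv_lt_0_compat; lra.
    + field. field_side.
  - intros t Ht. apply Rdiv_le_0_compat; nra.
Qed.

Lemma artanh_nonneg s : 0 <= s < 1 -> 0 <= artanh s.
Proof. intro Hs. pose proof (artanh_ge s Hs). assert (0 <= s ^ 3) by (apply pow_le; lra). lra. Qed.

Lemma artanh_mul_le s : 0 <= s < 1 -> artanh s * (1 - s ^ 2) <= s - 2 * s ^ 3 / 3.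
Proof.
  intro Hs.
  assert (H := le_of_is_derive_nonneg (fun t => t - 2 * t ^ 3 / 3 - artanh t * (1 - t ^ 2))
                 (fun t => 2 * t * (artanh t - t)) 0 s).
  cbv beta in H. rewrite artanh_0 in H.
  enough (0 - 2 * 0 ^ 3 / 3 - 0 * (1 - 0 ^ 2) <= s - 2 * s ^ 3 / 3 - artanh s * (1 - s ^ 2)) by lra.
  apply H.
  - lra.
  - intros t Ht. unfold artanh. auto_derive.
    + repeat split; try lra. apply Rdiv_lt_0_compat; lra.
    + unfold Rdiv, Rminus. field. field_side.
  - intros t Ht. pose proof (artanh_ge t ltac:(lra)).
    assert (0 <= t ^ 3 / 3) by (apply Rdiv_le_0_compat; [apply pow_le|]; lra).
    apply Rmult_le_pos; lra.
Qed.

Lemma artanh_le s : 0 <= s < 1 -> artanh s <= s + s ^ 3 / (3 * (1 - s ^ 2)).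
Proof.
  intro Hs.
  assert (H := le_of_is_derive_nonneg (fun t => t + t ^ 3 / (3 * (1 - t ^ 2)) - artanh t)
                 (fun t => 2 * t ^ 4 / (3 * (1 - t ^ 2) ^ 2)) 0 s).
  cbv beta in H. rewrite artanh_0 in H.
  enough (0 + 0 ^ 3 / (3 * (1 - 0 ^ 2)) - 0 <= s + s ^ 3 / (3 * (1 - s ^ 2)) - artanh s) by lra.
  apply H.
  - lra.
  - intros t Ht. unfold artanh. auto_derive.
    + repeat split; try solve_nonzero; try lra. apply Rdiv_lt_0_compat; lra.
    + field. field_side.
  - intros t Ht. assert (0 < 1 - t ^ 2) by nra.
    apply Rdiv_le_0_compat; [|apply Rmult_lt_0_compat; [lra | apply pow_lt; lra]].
    assert (0 <= t ^ 4) by (apply pow_le; lra). lra.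
Qed.

Lemma ln_le_4_sqrt_sqrt z : 1 <= z -> ln z <= 4 * sqrt (sqrt z).
Proof.
  intro Hz. set (w := sqrt (sqrt z)).
  assert (Hw : 0 < w) by (apply sqrt_lt_R0, sqrt_lt_R0; lra).
  assert (Hz4 : z = w ^ 4).
  { unfold w. replace 4%nat with (2 * 2)%nat by reflexivity.
    rewrite pow_mult, !pow2_sqrt; [reflexivity | lra | apply sqrt_pos]. }
  rewrite Hz4, ln_pow by lra.
  assert (H := exp_ineq1_le (ln w)). rewrite exp_ln in H by lra. simpl. lra.
Qed.

Lemma artanh_pow4_mul_le s : 0 <= s < 1 -> artanh s ^ 4 * (1 - s ^ 2) <= 64.
Proof.
  intro Hs. set (z := (1 + s) / (1 - s)).
  assert (Hz : 1 <= z) by (unfold z; apply (Rmult_le_reg_r (1 - s)); [lra|]; field_simplify; lra).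
  assert (HA : 0 <= artanh s) by (apply artanh_nonneg; lra).
  assert (HA2 : artanh s <= 2 * sqrt (sqrt z)).
  { unfold artanh. fold z. pose proof (ln_le_4_sqrt_sqrt z Hz). lra. }
  assert (Hw4 : sqrt (sqrt z) ^ 4 = z).
  { replace 4%nat with (2 * 2)%nat by reflexivity.
    rewrite pow_mult, !pow2_sqrt; [reflexivity | lra | apply sqrt_pos]. }
  assert (artanh s ^ 4 <= 16 * z).
  { rewrite <- Hw4. replace (16 * sqrt (sqrt z) ^ 4) with ((2 * sqrt (sqrt z)) ^ 4) by ring.
    apply pow_incr. lra. }
  assert (z * (1 - s ^ 2) = (1 + s) ^ 2) by (unfold z; field; lra).
  apply Rle_trans with (16 * z * (1 - s ^ 2)); [apply Rmult_le_compat_r; nra | nra].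
Qed.

Lemma artanh_pow_mul_le s k : 0 <= s < 1 -> (k <= 4)%nat -> artanh s ^ k * (1 - s ^ 2) <= 65.
Proof.
  intros Hs Hk. pose proof (artanh_pow4_mul_le s Hs). pose proof (artanh_nonneg s Hs).
  assert (Hu : 0 <= 1 - s ^ 2 <= 1) by nra.
  assert (artanh s ^ k <= 1 + artanh s ^ 4).
  { destruct (Rle_or_lt (artanh s) 1) as [H1 | H1].
    - assert (artanh s ^ k <= 1 ^ k) by (apply pow_incr; lra). rewrite pow1 in *.
      pose proof (pow_le (artanh s) 4). lra.
    - assert (artanh s ^ k <= artanh s ^ 4) by (apply Rle_pow; lra || lia). pose proof (pow_le (artanh s) 4). lra. }
  apply Rle_trans with ((1 + artanh s ^ 4) * (1 - s ^ 2)); [apply Rmult_le_compat_r; lra | nra].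
Qed.

Lemma artanh_mul_lt s : 0 < s < 1 -> artanh s * (1 - s ^ 2) < s.
Proof. intro Hs. pose proof (artanh_mul_le s ltac:(lra)). assert (0 < s ^ 3) by (apply pow_lt; lra). lra. Qed.

(** * Parametrising theta by s *)

Definition theta_of (s : R) : R := -1 + artanh s / s.
Definition Q (s : R) : R := / (1 - s ^ 2) - artanh s / s.
Definition dQ (s : R) : R := 2 * s / (1 - s ^ 2) ^ 2 - / (s * (1 - s ^ 2)) + artanh s / s ^ 2.

Lemma is_derive_theta_of s : 0 < s < 1 -> is_derive theta_of s (Q s / s).
Proof.
  intro Hs. unfold theta_of, Q, artanh. auto_derive.
  - repeat split; try lra. apply Rdiv_lt_0_compat; lra.
  - unfold Rdiv, Rminus. field. field_side.
Qed.

Lemma is_derive_Q s : 0 < s < 1 -> is_derive Q s (dQ s).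
Proof.
  intro Hs. unfold dQ, Q, artanh. auto_derive.
  - repeat split; try solve_nonzero; try lra. apply Rdiv_lt_0_compat; lra.
  - unfold Rdiv, Rminus. field. field_side.
Qed.

Section ThetaOfBounds.

Variable s : R.
Hypothesis s_range : 0 < s < 1.

Lemma Q_ge : 2 / 3 * s ^ 2 / (1 - s ^ 2) <= Q s.
Proof.
  pose proof (artanh_mul_le s ltac:(lra)).
  apply (Rmult_le_reg_r (s * (1 - s ^ 2))); [nra|].
  replace (Q s * (s * (1 - s ^ 2))) with (s - artanh s * (1 - s ^ 2)) by (unfold Q; field; field_side).
  replace (2 / 3 * s ^ 2 / (1 - s ^ 2) * (s * (1 - s ^ 2))) with (2 / 3 * s ^ 3) by (field; field_side).
  lra.
Qed.

Lemma Q_pos : 0 < Q s.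
Proof. pose proof Q_ge. assert (0 < 2 / 3 * s ^ 2 / (1 - s ^ 2)) by (apply Rdiv_lt_0_compat; nra). lra. Qed.

Lemma Q_inv_le : / Q s <= 3 * (1 - s ^ 2) / (2 * s ^ 2).
Proof.
  replace (3 * (1 - s ^ 2) / (2 * s ^ 2)) with (/ (2 / 3 * s ^ 2 / (1 - s ^ 2))) by (field; field_side).
  apply Rinv_le_contravar; [apply Rdiv_lt_0_compat; nra | apply Q_ge].
Qed.

Lemma theta_of_ge : s ^ 2 / 3 <= theta_of s.
Proof.
  pose proof (artanh_ge s ltac:(lra)). apply (Rmult_le_reg_r s); [lra|].
  replace (theta_of s * s) with (artanh s - s) by (unfold theta_of; field; lra).
  replace (s ^ 2 / 3 * s) with (s ^ 3 / 3) by field. lra.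
Qed.

Lemma theta_of_le : theta_of s <= s ^ 2 / (3 * (1 - s ^ 2)).
Proof.
  pose proof (artanh_le s ltac:(lra)). apply (Rmult_le_reg_r s); [lra|].
  replace (theta_of s * s) with (artanh s - s) by (unfold theta_of; field; lra).
  replace (s ^ 2 / (3 * (1 - s ^ 2)) * s) with (s ^ 3 / (3 * (1 - s ^ 2))) by (field; field_side). lra.
Qed.

Lemma Rabs_dQ_le : Rabs (dQ s) <= 3 * s / (1 - s ^ 2) ^ 2.
Proof.
  pose proof (artanh_ge s ltac:(lra)). pose proof (artanh_mul_le s ltac:(lra)).
  assert (Hu : 0 < 1 - s ^ 2) by nra.
  replace (dQ s) with (2 * s / (1 - s ^ 2) ^ 2 - (s - artanh s * (1 - s ^ 2)) / (s ^ 2 * (1 - s ^ 2)))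
    by (unfold dQ; field; field_side).
  set (A := artanh s) in *. set (u := 1 - s ^ 2) in *.
  set (r := (s - A * u) / (s ^ 2 * u)).
  assert (Hr0 : 0 <= r).
  { apply Rdiv_le_0_compat; [|apply Rmult_lt_0_compat; nra].
    assert (0 <= s ^ 3) by (apply pow_le; lra). lra. }
  assert (Hr1 : r <= s / u ^ 2).
  { unfold r. apply (Rmult_le_reg_r (s ^ 2 * u ^ 2)); [apply Rmult_lt_0_compat; nra|].
    replace ((s - A * u) / (s ^ 2 * u) * (s ^ 2 * u ^ 2)) with ((s - A * u) * u) by (field; field_side).
    replace (s / u ^ 2 * (s ^ 2 * u ^ 2)) with (s ^ 3) by (field; field_side).
    assert (A * u >= (s + s ^ 3 / 3) * u) by (apply Rmult_ge_compat_r; lra).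
    unfold u in *. nra. }
  replace (3 * s / u ^ 2) with (3 * (s / u ^ 2)) by (field; lra).
  replace (2 * s / u ^ 2) with (2 * (s / u ^ 2)) by (field; lra).
  assert (0 <= s / u ^ 2) by (apply Rdiv_le_0_compat; nra).
  apply Rabs_le. lra.
Qed.

End ThetaOfBounds.

Lemma theta_of_lt a b : 0 < a -> a < b -> b < 1 -> theta_of a < theta_of b.
Proof.
  intros Ha Hab Hb. apply (lt_of_is_derive_pos theta_of (fun s => Q s / s)); [lra | |].
  - intros t Ht. apply is_derive_theta_of. lra.
  - intros t Ht. apply Rdiv_lt_0_compat; [apply Q_pos|]; lra.
Qed.

Lemma lt_of_theta_of_lt a b : 0 < a < 1 -> 0 < b < 1 -> theta_of a < theta_of b -> a < b.
Proof.
  intros Ha Hb HT. destruct (Rlt_or_le a b) as [| [Hba | ->]]; [assumption | | lra].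
  pose proof (theta_of_lt b a). lra.
Qed.

Lemma theta_of_surj t : 0 < t -> exists s, 0 < s < 1 /\ theta_of s = t.
Proof.
  intro Ht.
  set (s1 := sqrt (t / (1 + t))).
  assert (Hs1sq : s1 ^ 2 = t / (1 + t)) by (apply pow2_sqrt, Rdiv_le_0_compat; lra).
  assert (Hs1sq1 : s1 ^ 2 < 1) by (rewrite Hs1sq; apply (Rmult_lt_reg_r (1 + t)); [lra|]; field_simplify; lra).
  assert (Hs1 : 0 < s1 < 1) by (split; [apply sqrt_lt_R0, Rdiv_lt_0_compat; lra | nra]).
  assert (HT1 : theta_of s1 < t).
  { apply Rle_lt_trans with (s1 ^ 2 / (3 * (1 - s1 ^ 2))); [apply theta_of_le; exact Hs1|].
    rewrite Hs1sq. replace (t / (1 + t) / (3 * (1 - t / (1 + t)))) with (t / 3) by (field; lra). lra. }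
  set (e := exp (2 * (t + 2))).
  assert (He : 1 < e) by (unfold e; rewrite <- exp_0; apply exp_increasing; lra).
  set (s2 := (e - 1) / (e + 1)).
  assert (Hs2 : 0 < s2 < 1).
  { unfold s2. split; [apply Rdiv_lt_0_compat; lra|].
    apply (Rmult_lt_reg_r (e + 1)); [lra|]. field_simplify; lra. }
  assert (HA2 : artanh s2 = t + 2).
  { unfold artanh. replace ((1 + s2) / (1 - s2)) with e by (unfold s2; field; lra).
    unfold e. rewrite ln_exp. field. }
  assert (HT2 : t < theta_of s2).
  { unfold theta_of. rewrite HA2.
    enough (t + 2 <= (t + 2) / s2) by lra.
    apply (Rmult_le_reg_r s2); [lra|]. replace ((t + 2) / s2 * s2) with (t + 2) by (field; lra). nra. }
  assert (Hlt : s1 < s2) by (apply lt_of_theta_of_lt; lra).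
  destruct (IVT_interv (fun s => theta_of s - t) s1 s2) as [z [Hz Ez]]; [| exact Hlt | lra | lra |].
  - intros a Ha. apply continuity_pt_minus; [|apply continuity_pt_const; intros ? ?; reflexivity].
    apply derivable_continuous_pt, ex_derive_Reals_0. exists (Q a / a). apply is_derive_theta_of. lra.
  - exists z. split; lra.
Qed.

Lemma lam_spec_lam t : 0 < t -> lam_spec t (lam t).
Proof.
  intro Ht. destruct (theta_of_surj t Ht) as [s [Hs Es]].
  unfold lam. destruct (Rlt_dec 0 t) as [_|]; [|lra].
  apply (epsilon_spec (inhabits (/ 4)) (lam_spec t)). exists ((1 - s ^ 2) / 4).
  split; [split; nra|].
  replace (1 - 4 * ((1 - s ^ 2) / 4)) with (s ^ 2) by field.
  rewrite sqrt_pow2 by lra. exact Es.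
Qed.

Definition s_of (t : R) : R := sqrt (1 - 4 * lam t).

Lemma s_of_spec t : 0 < t ->
  0 < s_of t < 1 /\ theta_of (s_of t) = t /\ lam t = (1 - s_of t ^ 2) / 4.
Proof.
  intro Ht. destruct (lam_spec_lam t Ht) as [Hl Hth].
  assert (Hsq : s_of t ^ 2 = 1 - 4 * lam t) by (apply pow2_sqrt; lra).
  split; [|split; [exact Hth | lra]].
  split; [apply sqrt_lt_R0; lra|].
  rewrite <- sqrt_1. apply sqrt_lt_1; lra.
Qed.

Lemma s_of_lt t1 t2 : 0 < t1 -> t1 < t2 -> s_of t1 < s_of t2.
Proof.
  intros H1 H12. destruct (s_of_spec t1 H1) as [S1 [T1 _]]. destruct (s_of_spec t2 ltac:(lra)) as [S2 [T2 _]].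
  apply lt_of_theta_of_lt; [exact S1 | exact S2 | lra].
Qed.

Lemma s_of_le t1 t2 : 0 < t1 -> t1 <= t2 -> s_of t1 <= s_of t2.
Proof. intros H1 [H12 | <-]; [left; apply s_of_lt | right]; auto. Qed.

Lemma is_derive_s_of t : 0 < t -> is_derive s_of t (s_of t / Q (s_of t)).
Proof.
  intro Ht.
  destruct (s_of_spec (t / 2) ltac:(lra)) as [Sa [Ta _]].
  destruct (s_of_spec (2 * t) ltac:(lra)) as [Sb [Tb _]].
  destruct (s_of_spec t Ht) as [St [Tt _]].
  assert (Hab : s_of (t / 2) <= s_of t <= s_of (2 * t)) by (split; apply s_of_le; lra).
  assert (Hne : s_of (t / 2) < s_of (2 * t)) by (apply s_of_lt; lra).
  assert (Prf : forall a, s_of (t / 2) <= a <= s_of (2 * t) -> derivable_pt theta_of a).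
  { intros a Ha. apply ex_derive_Reals_0. exists (Q a / a). apply is_derive_theta_of. lra. }
  assert (Hcont : continuity_pt s_of t).
  { apply (continuity_pt_recip_interv theta_of s_of (s_of (t / 2)) (s_of (2 * t)) Hne).
    - intros x y Hx Hxy Hy. apply theta_of_lt; lra.
    - intros x Hx1 Hx2. rewrite Ta in Hx1. rewrite Tb in Hx2. unfold comp, id. apply s_of_spec. lra.
    - intros x Hx1 Hx2. rewrite Ta in Hx1. rewrite Tb in Hx2. split; apply s_of_le; lra.
    - intros a Ha. apply derivable_continuous_pt, Prf, Ha.
    - rewrite Ta, Tb. lra. }
  assert (H := derivable_pt_lim_recip_interv theta_of s_of (t / 2) (2 * t) t Prf Hcont
                 ltac:(lra) ltac:(lra) Hab).
  rewrite Derive_Reals, (Derive_of_is_derive theta_of (s_of t) (Q (s_of t) / s_of t)) in H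
    by (apply is_derive_theta_of; exact St).
  pose proof (Q_pos (s_of t) St).
  replace (s_of t / Q (s_of t)) with (1 / (Q (s_of t) / s_of t)) by (field; lra).
  apply is_derive_Reals, H.
  - intros x Hx. unfold comp, id. apply s_of_spec. lra.
  - apply Rgt_not_eq, Rdiv_lt_0_compat; lra.
Qed.

Lemma s_of_sq_le t : 0 < t -> s_of t ^ 2 <= 3 * Rmin 1 t.
Proof.
  intro Ht. destruct (s_of_spec t Ht) as [Hs [Ts _]]. pose proof (theta_of_ge _ Hs). rewrite Ts in *.
  apply Rmin_case; nra.
Qed.

(** * Derivatives of f and j *)

Definition d2f (s : R) : R := -2 / Q s.
Definition d3f (s : R) : R := 2 * s * dQ s / Q s ^ 3.

(* Along [s = s_of theta], [W s] is [1 - 4 (theta + 1) lambda(theta)], the argument of the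
   logarithm in [j_th], and [dW s], [d2W s] are its first two derivatives in [theta]. *)
Definition W (s : R) : R := (1 - s ^ 2) * Q s.
Definition dW (s : R) : R := - (1 - s ^ 2) + 2 * s * artanh s / Q s.
Definition dW_ds (s : R) : R :=
  2 * s + (2 * artanh s + 2 * s / (1 - s ^ 2)) / Q s - 2 * s * artanh s * dQ s / Q s ^ 2.
Definition d2W (s : R) : R := dW_ds s * (s / Q s).
Definition dj (s : R) : R := - dW s / (2 * W s).
Definition d2j (s : R) : R := - d2W s / (2 * W s) + dW s ^ 2 / (2 * W s ^ 2).

Lemma locally_gt0 t (P : R -> Prop) : 0 < t -> (forall y, 0 < y -> P y) -> locally t P.
Proof.
  intros Ht H. exists (mkposreal t Ht). intros y Hy. apply H.
  change (Rabs (y - t) < t) in Hy. apply Rabs_lt_between in Hy. lra.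
Qed.

Lemma ex_derive_s_of t : 0 < t -> ex_derive s_of t.
Proof. intro Ht. exists (s_of t / Q (s_of t)). apply is_derive_s_of, Ht. Qed.

Lemma ex_derive_Q s : 0 < s < 1 -> ex_derive Q s.
Proof. intro Hs. exists (dQ s). apply is_derive_Q, Hs. Qed.

Lemma ex_derive_artanh s : 0 < s < 1 -> ex_derive artanh s.
Proof. intro Hs. exists (/ (1 - s ^ 2)). apply is_derive_artanh. lra. Qed.

Ltac derive_side := repeat split;
  try (apply ex_derive_s_of; assumption); try (apply ex_derive_Q; assumption);
  try (apply ex_derive_artanh; assumption); try solve_nonzero; try lra; try nra.

Lemma W_eq s : 0 < s < 1 -> W s = 1 - (theta_of s + 1) * (1 - s ^ 2).
Proof. intro Hs. unfold W, theta_of, Q. field. field_side. Qed.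

Lemma W_pos s : 0 < s < 1 -> 0 < W s.
Proof. intro Hs. pose proof (Q_pos s Hs). apply Rmult_lt_0_compat; nra. Qed.

Lemma is_derive_f_th t : 0 < t -> is_derive f_th t (-2 * ln (s_of t)).
Proof.
  intro Ht.
  apply is_derive_ext_loc with (fun t => - ln ((1 - s_of t ^ 2) / 4) - 2 * t - t * ln (s_of t ^ 2)).
  { apply locally_gt0; [exact Ht|]. intros y Hy. destruct (s_of_spec y Hy) as [_ [_ E]].
    unfold f_th. rewrite E. do 3 f_equal. field. }
  destruct (s_of_spec t Ht) as [Hs [Ts _]].
  pose proof (Q_pos (s_of t) Hs). pose proof (artanh_mul_lt (s_of t) Hs).
  auto_derive; [derive_side|].
  rewrite (Derive_of_is_derive (fun x => s_of x) t _ (is_derive_s_of t Ht)).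
  replace (ln (s_of t * (s_of t * 1))) with (2 * ln (s_of t)) by (rewrite Rmult_1_r, ln_mult by lra; ring).
  set (s := s_of t) in *. rewrite <- Ts. unfold theta_of, Q in *. field. field_side.
Qed.

Lemma is_derive_ln_s_of t : 0 < t -> is_derive (fun t => -2 * ln (s_of t)) t (d2f (s_of t)).
Proof.
  intro Ht. destruct (s_of_spec t Ht) as [Hs _]. pose proof (Q_pos (s_of t) Hs).
  auto_derive; [derive_side|].
  rewrite (Derive_of_is_derive (fun x => s_of x) t _ (is_derive_s_of t Ht)).
  unfold d2f. field. field_side.
Qed.

Lemma is_derive_d2f_s_of t : 0 < t -> is_derive (fun t => d2f (s_of t)) t (d3f (s_of t)).
Proof.
  intro Ht. destruct (s_of_spec t Ht) as [Hs _]. pose proof (Q_pos (s_of t) Hs).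
  unfold d2f. auto_derive; [derive_side|].
  rewrite (Derive_of_is_derive (fun x => s_of x) t _ (is_derive_s_of t Ht)).
  rewrite (Derive_of_is_derive (fun x => Q x) (s_of t) _ (is_derive_Q (s_of t) Hs)).
  unfold d3f. field. field_side.
Qed.

Lemma is_derive_j_th t : 0 < t -> is_derive j_th t (dj (s_of t)).
Proof.
  intro Ht.
  apply is_derive_ext_loc with (fun t => - / 2 * ln (1 - (t + 1) * (1 - s_of t ^ 2)) + / 2 * ln 2).
  { apply locally_gt0; [exact Ht|]. intros y Hy. destruct (s_of_spec y Hy) as [_ [_ E]].
    unfold j_th. rewrite E. do 4 f_equal. field. }
  destruct (s_of_spec t Ht) as [Hs [Ts _]].
  pose proof (Q_pos (s_of t) Hs). pose proof (W_pos (s_of t) Hs). pose proof (W_eq (s_of t) Hs).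
  pose proof (artanh_mul_lt (s_of t) Hs).
  rewrite Ts in *. auto_derive; [derive_side|].
  rewrite (Derive_of_is_derive (fun x => s_of x) t _ (is_derive_s_of t Ht)).
  set (s := s_of t) in *. rewrite <- Ts. unfold dj, dW, W, theta_of, Q in *. field. field_side.
Qed.

Lemma is_derive_dj_s_of t : 0 < t -> is_derive (fun t => dj (s_of t)) t (d2j (s_of t)).
Proof.
  intro Ht. destruct (s_of_spec t Ht) as [Hs _].
  pose proof (Q_pos (s_of t) Hs). pose proof (W_pos (s_of t) Hs). pose proof (artanh_mul_lt (s_of t) Hs).
  unfold dj, dW, W in *. auto_derive; [derive_side|].
  rewrite (Derive_of_is_derive (fun x => s_of x) t _ (is_derive_s_of t Ht)).
  rewrite (Derive_of_is_derive (fun x => Q x) (s_of t) _ (is_derive_Q (s_of t) Hs)).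
  rewrite (Derive_of_is_derive (fun x => artanh x) (s_of t) _ (is_derive_artanh (s_of t) ltac:(lra))).
  set (s := s_of t) in *. unfold d2j, d2W, dW_ds, dW, W, dQ, Q in *. field. field_side.
Qed.

Lemma Derive_f_th t : 0 < t -> Derive f_th t = -2 * ln (s_of t).
Proof. intro Ht. apply Derive_of_is_derive, is_derive_f_th, Ht. Qed.

Lemma Derive2_f_th t : 0 < t -> Derive (Derive f_th) t = d2f (s_of t).
Proof.
  intro Ht. rewrite (Derive_ext_loc (Derive f_th) (fun y => -2 * ln (s_of y))).
  - apply Derive_of_is_derive, is_derive_ln_s_of, Ht.
  - apply locally_gt0; [exact Ht|]. intros y Hy. apply Derive_f_th, Hy.
Qed.

Lemma Derive_j_th t : 0 < t -> Derive j_th t = dj (s_of t).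
Proof. intro Ht. apply Derive_of_is_derive, is_derive_j_th, Ht. Qed.

(** * Bounds on the derivatives *)

Section DerivativeBounds.

Variable s : R.
Hypothesis s_range : 0 < s < 1.

Let u_range : 0 < 1 - s ^ 2 <= 1.
Proof. nra. Qed.

Let A_nonneg : 0 <= artanh s.
Proof. apply artanh_nonneg. lra. Qed.

Let Au_le : artanh s * (1 - s ^ 2) <= s.
Proof. pose proof (artanh_mul_lt s s_range). lra. Qed.

Let Au_nonneg : 0 <= artanh s * (1 - s ^ 2).
Proof. nra. Qed.

Let theta_nonneg : 0 <= theta_of s.
Proof. pose proof (theta_of_ge s s_range). nra. Qed.

Lemma theta_of_le_small : s ^ 2 <= 1 / 2 -> theta_of s <= 2 * s ^ 2 / 3.
Proof.
  intro Hsmall.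
  apply Rle_trans with (s ^ 2 / (3 * (1 - s ^ 2))); [apply theta_of_le, s_range|].
  apply (Rmult_le_reg_r (3 * (1 - s ^ 2))); [lra|].
  replace (s ^ 2 / (3 * (1 - s ^ 2)) * (3 * (1 - s ^ 2))) with (s ^ 2) by (field; lra). nra.
Qed.

Lemma theta_of_le_large : 1 / 2 < s -> theta_of s <= 2 * artanh s.
Proof.
  intro Hlarge. unfold theta_of.
  enough (artanh s / s <= 2 * artanh s) by lra.
  apply (Rmult_le_reg_r s); [lra|]. replace (artanh s / s * s) with (artanh s) by (field; lra). nra.
Qed.

Lemma inv_pow_le_large k : 1 / 2 < s -> / s ^ k <= 2 ^ k.
Proof.
  intro Hlarge. replace (2 ^ k) with (/ (/ 2) ^ k) by (rewrite pow_inv, Rinv_inv; reflexivity).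
  apply Rinv_le_contravar; [apply pow_lt; lra | apply pow_incr; lra].
Qed.

Lemma theta_mul_Rabs_d2f_le : theta_of s * Rabs (d2f s) <= 1.
Proof.
  pose proof (theta_of_le s s_range). pose proof (Q_inv_le s s_range). pose proof (Q_pos s s_range).
  unfold d2f. replace (-2 / Q s) with (- (2 * / Q s)) by (unfold Rdiv; ring).
  rewrite Rabs_Ropp, Rabs_right by (apply Rle_ge, Rmult_le_pos, Rlt_le, Rinv_0_lt_compat; lra).
  apply Rle_trans with (s ^ 2 / (3 * (1 - s ^ 2)) * (2 * (3 * (1 - s ^ 2) / (2 * s ^ 2)))).
  - apply Rmult_le_compat; try lra. apply Rmult_le_pos, Rlt_le, Rinv_0_lt_compat; lra.
  - right. field. field_side.
Qed.

Lemma Rabs_d3f_le : Rabs (d3f s) <= 81 * (1 - s ^ 2) / (4 * s ^ 4).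
Proof.
  pose proof (Q_inv_le s s_range). pose proof (Q_pos s s_range). pose proof (Rabs_dQ_le s s_range).
  replace (d3f s) with (2 * s * dQ s * (/ Q s) ^ 3) by (unfold d3f; field; lra).
  rewrite !Rabs_mult, (Rabs_right 2), (Rabs_right s), (Rabs_right ((/ Q s) ^ 3))
    by (try apply Rle_ge, pow_le, Rlt_le, Rinv_0_lt_compat; lra).
  apply Rle_trans with (2 * s * (3 * s / (1 - s ^ 2) ^ 2) * (3 * (1 - s ^ 2) / (2 * s ^ 2)) ^ 3).
  - apply Rmult_le_compat.
    + apply Rmult_le_pos; [lra | apply Rabs_pos].
    + apply pow_le, Rlt_le, Rinv_0_lt_compat; lra.
    + apply Rmult_le_compat_l; lra.
    + apply pow_incr. split; [apply Rlt_le, Rinv_0_lt_compat|]; lra.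
  - right. field. field_side.
Qed.

Lemma theta_sq_mul_Rabs_d3f_le : theta_of s ^ 2 * Rabs (d3f s) <= 100000.
Proof.
  pose proof Rabs_d3f_le.  pose proof (Rabs_pos (d3f s)).
  destruct (Rle_or_lt (s ^ 2) (1 / 2)) as [Hsmall | Hlarge].
  - apply Rle_trans with ((s ^ 2 / (3 * (1 - s ^ 2))) ^ 2 * (81 * (1 - s ^ 2) / (4 * s ^ 4))).
    + apply Rmult_le_compat; try lra; [apply pow_le; lra|].
      apply pow_incr. split; [lra | apply theta_of_le, s_range].
    + replace ((s ^ 2 / (3 * (1 - s ^ 2))) ^ 2 * (81 * (1 - s ^ 2) / (4 * s ^ 4)))
        with (9 / 4 * / (1 - s ^ 2)) by (field; field_side).
      enough (/ (1 - s ^ 2) <= 2) by lra.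
      replace 2 with (/ (1 / 2)) by field. apply Rinv_le_contravar; lra.
  - assert (Hs : 1 / 2 < s) by nra.
    pose proof (inv_pow_le_large 4 Hs). pose proof (artanh_pow_mul_le s 2 ltac:(lra) ltac:(lia)).
    apply Rle_trans with ((2 * artanh s) ^ 2 * (81 * (1 - s ^ 2) / (4 * s ^ 4))).
    + apply Rmult_le_compat; try lra; [apply pow_le; lra|].
      apply pow_incr. split; [lra | apply theta_of_le_large, Hs].
    + replace ((2 * artanh s) ^ 2 * (81 * (1 - s ^ 2) / (4 * s ^ 4)))
        with (81 * (artanh s ^ 2 * (1 - s ^ 2)) * / s ^ 4) by (field; lra).
      assert (0 <= artanh s ^ 2 * (1 - s ^ 2)) by (apply Rmult_le_pos; [apply pow_le|]; lra).
      apply Rle_trans with (81 * 65 * 2 ^ 4); [|lra].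
      apply Rmult_le_compat; try lra; apply Rlt_le, Rinv_0_lt_compat, pow_lt; lra.
Qed.

Lemma W_inv_le : / W s <= 3 / (2 * s ^ 2).
Proof.
  pose proof (Q_ge s s_range).
  replace (3 / (2 * s ^ 2)) with (/ (2 / 3 * s ^ 2)) by (field; lra).
  apply Rinv_le_contravar; [nra|]. unfold W.
  replace (2 / 3 * s ^ 2) with ((1 - s ^ 2) * (2 / 3 * s ^ 2 / (1 - s ^ 2))) by (field; lra).
  apply Rmult_le_compat_l; lra.
Qed.

Lemma Rabs_dW_le : Rabs (dW s) <= (1 - s ^ 2) + 3 * (artanh s * (1 - s ^ 2)) / s.
Proof.
  pose proof (Q_inv_le s s_range). pose proof (Q_pos s s_range).
  replace (dW s) with (- (1 - s ^ 2) + 2 * s * artanh s * / Q s) by (unfold dW; field; lra).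
  assert (0 <= 2 * s * artanh s * / Q s)
    by (apply Rmult_le_pos; [apply Rmult_le_pos|apply Rlt_le, Rinv_0_lt_compat]; lra).
  assert (2 * s * artanh s * / Q s <= 3 * (artanh s * (1 - s ^ 2)) / s).
  { replace (3 * (artanh s * (1 - s ^ 2)) / s)
      with (2 * s * artanh s * (3 * (1 - s ^ 2) / (2 * s ^ 2))) by (field; lra).
    apply Rmult_le_compat_l; [apply Rmult_le_pos|]; lra. }
  apply Rabs_le. lra.
Qed.

Lemma Rabs_dW_ds_le :
  Rabs (dW_ds s) <= 2 * s + 3 * (artanh s * (1 - s ^ 2)) / s ^ 2 + 3 / s + 27 * artanh s / (2 * s ^ 2).
Proof.
  pose proof (Q_inv_le s s_range). pose proof (Q_pos s s_range). pose proof (Rabs_dQ_le s s_range).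
  replace (dW_ds s) with (2 * s + (2 * artanh s + 2 * s / (1 - s ^ 2)) * / Q s
                          - 2 * s * artanh s * dQ s * (/ Q s) ^ 2) by (unfold dW_ds; field; lra).
  assert (Hp : 0 <= 2 * artanh s + 2 * s / (1 - s ^ 2))
    by (assert (0 <= 2 * s / (1 - s ^ 2)) by (apply Rdiv_le_0_compat; lra); lra).
  assert (Hq : 0 <= (2 * artanh s + 2 * s / (1 - s ^ 2)) * / Q s)
    by (apply Rmult_le_pos; [|apply Rlt_le, Rinv_0_lt_compat]; lra).
  assert (Hlin : (2 * artanh s + 2 * s / (1 - s ^ 2)) * / Q s
               <= 3 * (artanh s * (1 - s ^ 2)) / s ^ 2 + 3 / s).
  { replace (3 * (artanh s * (1 - s ^ 2)) / s ^ 2 + 3 / s)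
      with ((2 * artanh s + 2 * s / (1 - s ^ 2)) * (3 * (1 - s ^ 2) / (2 * s ^ 2))) by (field; lra).
    apply Rmult_le_compat_l; lra. }
  assert (Hquad : Rabs (2 * s * artanh s * dQ s * (/ Q s) ^ 2) <= 27 * artanh s / (2 * s ^ 2)).
  { rewrite !Rabs_mult, (Rabs_right 2), (Rabs_right s), (Rabs_right (artanh s)), (Rabs_right ((/ Q s) ^ 2))
      by (try apply Rle_ge, pow_le, Rlt_le, Rinv_0_lt_compat; lra).
    replace (27 * artanh s / (2 * s ^ 2))
      with (2 * s * artanh s * (3 * s / (1 - s ^ 2) ^ 2) * (3 * (1 - s ^ 2) / (2 * s ^ 2)) ^ 2)
      by (field; lra).
    apply Rmult_le_compat.
    - apply Rmult_le_pos; [apply Rmult_le_pos; lra | apply Rabs_pos].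
    - apply pow_le, Rlt_le, Rinv_0_lt_compat; lra.
    - apply Rmult_le_compat_l; [apply Rmult_le_pos|]; lra.
    - apply pow_incr. split; [apply Rlt_le, Rinv_0_lt_compat|]; lra. }
  apply Rabs_le_between in Hquad. apply Rabs_le. lra.
Qed.

Lemma Rabs_d2W_le : Rabs (d2W s) <= 8 * (1 - s ^ 2) / s ^ 2 + 25 * (artanh s * (1 - s ^ 2)) / s ^ 3.
Proof.
  pose proof (Q_inv_le s s_range). pose proof (Q_pos s s_range). pose proof Rabs_dW_ds_le.
  unfold d2W. rewrite Rabs_mult, (Rabs_right (s / Q s)) by (apply Rle_ge, Rdiv_le_0_compat; lra).
  apply Rle_trans with ((2 * s + 3 * (artanh s * (1 - s ^ 2)) / s ^ 2 + 3 / s + 27 * artanh s / (2 * s ^ 2))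
                        * (s * (3 * (1 - s ^ 2) / (2 * s ^ 2)))).
  - apply Rmult_le_compat; [apply Rabs_pos | apply Rdiv_le_0_compat; lra | lra |].
    unfold Rdiv at 1. apply Rmult_le_compat_l; lra.
  - apply (Rmult_le_reg_r (4 * s ^ 3)); [apply Rmult_lt_0_compat; [lra | apply pow_lt; lra]|].
    set (A := artanh s) in *. set (u := 1 - s ^ 2) in *.
    replace ((2 * s + 3 * (A * u) / s ^ 2 + 3 / s + 27 * A / (2 * s ^ 2)) * (s * (3 * u / (2 * s ^ 2)))
             * (4 * s ^ 3)) with (12 * u * s ^ 3 + 18 * (A * u) * u + 18 * u * s + 81 * (A * u))
      by (field; lra).
    replace ((8 * u / s ^ 2 + 25 * (A * u) / s ^ 3) * (4 * s ^ 3)) with (32 * u * s + 100 * (A * u))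
      by (field; lra).
    assert (u * s ^ 3 <= u * s) by (apply Rmult_le_compat_l; nra).
    assert (A * u * u <= A * u) by nra.
    nra.
Qed.

Lemma theta_mul_Rabs_dW_div_W_le : theta_of s * Rabs (dW s) * / W s <= 4000.
Proof.
  pose proof Rabs_dW_le. pose proof W_inv_le. pose proof (W_pos s s_range). pose proof (Rabs_pos (dW s)).
  assert (0 < / W s) by (apply Rinv_0_lt_compat; lra).
  destruct (Rle_or_lt (s ^ 2) (1 / 2)) as [Hsmall | Hlarge].
  - assert (3 * (artanh s * (1 - s ^ 2)) / s <= 3).
    { apply (Rmult_le_reg_r s); [lra|].
      replace (3 * (artanh s * (1 - s ^ 2)) / s * s) with (3 * (artanh s * (1 - s ^ 2))) by (field; lra). lra. }
    apply Rle_trans with (2 * s ^ 2 / 3 * 4 * (3 / (2 * s ^ 2))).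
    + apply Rmult3_le_compat; repeat split; try lra. apply theta_of_le_small, Hsmall.
    + replace (2 * s ^ 2 / 3 * 4 * (3 / (2 * s ^ 2))) with 4 by (field; lra). lra.
  - assert (Hs : 1 / 2 < s) by nra. pose proof (inv_pow_le_large 1 Hs).
    pose proof (artanh_pow_mul_le s 1 ltac:(lra) ltac:(lia)). pose proof (artanh_pow_mul_le s 2 ltac:(lra) ltac:(lia)).
    assert (3 * (artanh s * (1 - s ^ 2)) / s <= 6 * (artanh s * (1 - s ^ 2))).
    { unfold Rdiv. rewrite pow_1 in *. nra. }
    assert (3 / (2 * s ^ 2) <= 3) by (apply (Rmult_le_reg_r (2 * s ^ 2)); [lra|]; field_simplify; nra).
    apply Rle_trans with (2 * artanh s * ((1 - s ^ 2) + 6 * (artanh s * (1 - s ^ 2))) * 3).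
    + apply Rmult3_le_compat; repeat split; try lra. apply theta_of_le_large, Hs.
    + replace (2 * artanh s * ((1 - s ^ 2) + 6 * (artanh s * (1 - s ^ 2))) * 3)
        with (6 * (artanh s ^ 1 * (1 - s ^ 2)) + 36 * (artanh s ^ 2 * (1 - s ^ 2))) by ring.
      lra.
Qed.

Lemma theta_sq_mul_Rabs_d2W_div_W_le : theta_of s ^ 2 * Rabs (d2W s) * / W s <= 200000.
Proof.
  pose proof Rabs_d2W_le. pose proof W_inv_le. pose proof (W_pos s s_range). pose proof (Rabs_pos (d2W s)).
  assert (0 < / W s) by (apply Rinv_0_lt_compat; lra).
  destruct (Rle_or_lt (s ^ 2) (1 / 2)) as [Hsmall | Hlarge].
  - assert (8 * (1 - s ^ 2) / s ^ 2 + 25 * (artanh s * (1 - s ^ 2)) / s ^ 3 <= 33 / s ^ 2).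
    { apply (Rmult_le_reg_r (s ^ 3)); [apply pow_lt; lra|].
      replace ((8 * (1 - s ^ 2) / s ^ 2 + 25 * (artanh s * (1 - s ^ 2)) / s ^ 3) * s ^ 3)
        with (8 * (1 - s ^ 2) * s + 25 * (artanh s * (1 - s ^ 2))) by (field; lra).
      replace (33 / s ^ 2 * s ^ 3) with (33 * s) by (field; lra). nra. }
    apply Rle_trans with ((2 * s ^ 2 / 3) ^ 2 * (33 / s ^ 2) * (3 / (2 * s ^ 2))).
    + apply Rmult3_le_compat; repeat split; try lra; [apply pow_le; lra|].
      apply pow_incr. split; [lra | apply theta_of_le_small, Hsmall].
    + replace ((2 * s ^ 2 / 3) ^ 2 * (33 / s ^ 2) * (3 / (2 * s ^ 2))) with 22 by (field; lra). lra.
  - assert (Hs : 1 / 2 < s) by nra.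
    pose proof (inv_pow_le_large 2 Hs). pose proof (inv_pow_le_large 3 Hs).
    pose proof (artanh_pow_mul_le s 2 ltac:(lra) ltac:(lia)). pose proof (artanh_pow_mul_le s 3 ltac:(lra) ltac:(lia)).
    assert (8 * (1 - s ^ 2) / s ^ 2 + 25 * (artanh s * (1 - s ^ 2)) / s ^ 3
            <= 32 * (1 - s ^ 2) + 200 * (artanh s * (1 - s ^ 2))) by (unfold Rdiv; nra).
    assert (3 / (2 * s ^ 2) <= 3) by (apply (Rmult_le_reg_r (2 * s ^ 2)); [lra|]; field_simplify; nra).
    apply Rle_trans with ((2 * artanh s) ^ 2 * (32 * (1 - s ^ 2) + 200 * (artanh s * (1 - s ^ 2))) * 3).
    + apply Rmult3_le_compat; repeat split; try lra; [apply pow_le; lra|].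
      apply pow_incr. split; [lra | apply theta_of_le_large, Hs].
    + replace ((2 * artanh s) ^ 2 * (32 * (1 - s ^ 2) + 200 * (artanh s * (1 - s ^ 2))) * 3)
        with (384 * (artanh s ^ 2 * (1 - s ^ 2)) + 2400 * (artanh s ^ 3 * (1 - s ^ 2))) by ring.
      lra.
Qed.

Lemma theta_mul_Rabs_dj_le : theta_of s * Rabs (dj s) <= 2000.
Proof.
  pose proof theta_mul_Rabs_dW_div_W_le. pose proof (W_pos s s_range).
  replace (dj s) with (- (dW s * / W s / 2)) by (unfold dj; field; lra).
  rewrite Rabs_Ropp. unfold Rdiv. rewrite !Rabs_mult, (Rabs_right (/ W s)), (Rabs_right (/ 2))
    by (apply Rle_ge, Rlt_le, Rinv_0_lt_compat; lra).
  lra.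
Qed.

Lemma theta_sq_mul_Rabs_d2j_le : theta_of s ^ 2 * Rabs (d2j s) <= 10000000.
Proof.
  pose proof theta_mul_Rabs_dW_div_W_le. pose proof theta_sq_mul_Rabs_d2W_div_W_le.
  pose proof (W_pos s s_range).
  assert (0 <= theta_of s * Rabs (dW s) * / W s)
    by (apply Rmult_le_pos; [apply Rmult_le_pos; [|apply Rabs_pos] | apply Rlt_le, Rinv_0_lt_compat]; lra).
  replace (d2j s) with (- (d2W s * / W s / 2) + (dW s * / W s) ^ 2 / 2) by (unfold d2j; field; lra).
  apply Rle_trans with (theta_of s ^ 2 * Rabs (d2W s) * / W s / 2 + (theta_of s * Rabs (dW s) * / W s) ^ 2 / 2).
  - assert (Hinv : 0 < / W s) by (apply Rinv_0_lt_compat; lra).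
    assert (E1 : Rabs (- (d2W s * / W s / 2)) = Rabs (d2W s) * / W s / 2).
    { rewrite Rabs_Ropp. unfold Rdiv. rewrite !Rabs_mult, (Rabs_right (/ W s)), (Rabs_right (/ 2)); lra. }
    assert (E2 : Rabs ((dW s * / W s) ^ 2 / 2) = (Rabs (dW s) * / W s) ^ 2 / 2).
    { rewrite Rabs_right by (apply Rle_ge, Rdiv_le_0_compat; [apply pow2_ge_0 | lra]).
      rewrite <- (pow2_abs (dW s * / W s)), Rabs_mult, (Rabs_right (/ W s)) by lra. reflexivity. }
    eapply Rle_trans; [apply Rmult_le_compat_l; [apply pow2_ge_0 | apply Rabs_triang]|].
    rewrite E1, E2. right. field. lra.
  - assert ((theta_of s * Rabs (dW s) * / W s) ^ 2 <= 4000 ^ 2) by (apply pow_incr; lra). lra.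
Qed.

End DerivativeBounds.

(** * Stirling factors *)

Definition stirling_log_ratio (G : R) : R := 1 + (G - / 2) * ln (1 - / G).

Definition stirling_factor (g : nat) : R :=
  sqrt (INR g) * INR g ^ g / (sqrt (2 * PI) * exp (INR g) * INR (Factorial.fact g)).

Lemma Omega_S n g : Omega n (S g) =
  stirling_factor (S g) * INR n ^ (2 * S g - 2) * exp (INR n * f_th (INR (S g) / INR n) + j_th (INR (S g) / INR n)).
Proof. reflexivity. Qed.

Lemma stirling_factor_pos g : 0 < stirling_factor (S g).
Proof.
  pose proof (lt_0_INR (S g) ltac:(lia)). pose proof PI_RGT_0. pose proof (INR_fact_lt_0 (S g)).
  unfold stirling_factor. apply Rdiv_lt_0_compat.
  - apply Rmult_lt_0_compat; [apply sqrt_lt_R0; lra | apply pow_lt; lra].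
  - apply Rmult_lt_0_compat; [apply Rmult_lt_0_compat; [apply sqrt_lt_R0; lra | apply exp_pos] | lra].
Qed.

Lemma Rabs_stirling_ratio_le G : 2 <= G -> Rabs (stirling_log_ratio G) <= 3 / G ^ 2.
Proof.
  intro HG. unfold stirling_log_ratio. set (y := / G).
  assert (Hy : 0 <= y <= 1 / 2).
  { unfold y. split; [apply Rlt_le, Rinv_0_lt_compat; lra|].
    replace (1 / 2) with (/ 2) by field. apply Rinv_le_contravar; lra. }
  assert (H := Rabs_ln_1_sub_le y Hy). set (r := ln (1 - y) + y + y ^ 2 / 2) in *.
  replace (1 + (G - / 2) * ln (1 - y)) with (/ (4 * G ^ 2) + (G - / 2) * r) by (unfold r, y; field; lra).
  eapply Rle_trans; [apply Rabs_triang|].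
  rewrite Rabs_right by (apply Rle_ge, Rlt_le, Rinv_0_lt_compat; nra).
  rewrite Rabs_mult, (Rabs_right (G - / 2)) by lra.
  assert ((G - / 2) * Rabs r <= G * (2 * y ^ 3)) by (apply Rmult_le_compat; try lra; apply Rabs_pos).
  replace (G * (2 * y ^ 3)) with (2 / G ^ 2) in * by (unfold y; field; lra).
  assert (/ (4 * G ^ 2) <= 1 / G ^ 2) by (unfold Rdiv; rewrite Rmult_1_l; apply Rinv_le_contravar; nra).
  replace (3 / G ^ 2) with (1 / G ^ 2 + 2 / G ^ 2) by (field; lra). lra.
Qed.

Lemma stirling_factor_succ k :
  stirling_factor (S k) = exp (stirling_log_ratio (INR (S (S k)))) * stirling_factor (S (S k)).
Proof.
  set (G := INR (S (S k))).
  assert (HG' : INR (S k) = G - 1) by (unfold G; rewrite (S_INR (S k)); ring).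
  assert (HG1 : 0 < G - 1) by (rewrite <- HG'; apply lt_0_INR; lia).
  set (rho := 1 - / G). assert (Hrho : rho = (G - 1) / G) by (unfold rho; field; lra).
  assert (Hrho_pos : 0 < rho) by (rewrite Hrho; apply Rdiv_lt_0_compat; lra).
  assert (E : exp (stirling_log_ratio G) = exp 1 * rho ^ S k * sqrt rho).
  { unfold stirling_log_ratio. fold rho.
    replace (1 + (G - / 2) * ln rho) with (1 + INR (S k) * ln rho + / 2 * ln rho) by (rewrite HG'; field).
    rewrite !exp_plus. change (exp (INR (S k) * ln rho)) with (Rpower rho (INR (S k))).
    change (exp (/ 2 * ln rho)) with (Rpower rho (/ 2)).
    rewrite Rpower_pow, Rpower_sqrt by exact Hrho_pos. reflexivity. }
  rewrite E, Hrho, sqrt_div_alt by lra.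
  unfold stirling_factor. fold G. rewrite HG'.
  replace (INR (Factorial.fact (S (S k)))) with (G * INR (Factorial.fact (S k)))
    by (unfold G; rewrite <- mult_INR; reflexivity).
  replace (exp G) with (exp (G - 1) * exp 1) by (rewrite <- exp_plus; f_equal; ring).
  replace (G ^ S (S k)) with (G * G ^ S k) by reflexivity.
  replace (((G - 1) / G) ^ S k) with ((G - 1) ^ S k / G ^ S k)
    by (unfold Rdiv; rewrite Rpow_mult_distr, pow_inv; reflexivity).
  pose proof (sqrt_lt_R0 G ltac:(lra)). pose proof (sqrt_lt_R0 (2 * PI) ltac:(pose proof PI_RGT_0; lra)).
  pose proof (INR_fact_lt_0 (S k)). pose proof (pow_lt G (S k) ltac:(lra)).
  pose proof (exp_pos (G - 1)). pose proof (exp_pos 1).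
  field. repeat split; lra.
Qed.

Lemma beta_eq n k : (1 <= n)%nat ->
  let N := INR n in let G := INR (S (S k)) in
  beta n (S (S k)) = exp (stirling_log_ratio G + N * (f_th ((G - 1) / N) - f_th (G / N))
                          + (j_th ((G - 1) / N) - j_th (G / N))).
Proof.
  intros Hn N G.
  assert (HN : 0 < N) by (apply lt_0_INR; lia).
  assert (HG' : INR (S k) = G - 1) by (unfold G; rewrite (S_INR (S k)); ring).
  unfold beta. replace (S (S k) - 1)%nat with (S k) by lia.
  rewrite !Omega_S, stirling_factor_succ. fold N G. rewrite HG'.
  replace (2 * S (S k) - 2)%nat with (2 + (2 * S k - 2))%nat by lia. rewrite pow_add.
  set (X' := N * f_th ((G - 1) / N) + j_th ((G - 1) / N)). set (X := N * f_th (G / N) + j_th (G / N)).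
  replace (stirling_log_ratio G + N * (f_th ((G - 1) / N) - f_th (G / N)) + (j_th ((G - 1) / N) - j_th (G / N)))
    with (stirling_log_ratio G + X' + - X) by (unfold X, X'; ring).
  rewrite !exp_plus, exp_Ropp.
  pose proof (stirling_factor_pos (S k)). pose proof (pow_lt N (2 * S k - 2) HN). pose proof (exp_pos X).
  field. repeat split; lra.
Qed.

Lemma theta_derivative_bounds t : 0 < t ->
  t * Rabs (d2f (s_of t)) <= 1 /\ t * Rabs (dj (s_of t)) <= 2000 /\
  t ^ 2 * Rabs (d3f (s_of t)) <= 100000 /\ t ^ 2 * Rabs (d2j (s_of t)) <= 10000000.
Proof.
  intro Ht. destruct (s_of_spec t Ht) as [Hs [Ts _]].
  pose proof (theta_mul_Rabs_d2f_le _ Hs). pose proof (theta_mul_Rabs_dj_le _ Hs).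
  pose proof (theta_sq_mul_Rabs_d3f_le _ Hs). pose proof (theta_sq_mul_Rabs_d2j_le _ Hs).
  rewrite Ts in *. tauto.
Qed.

Lemma Rabs_le_on_half_interval C t tau phi : 0 < t -> t / 2 <= tau -> tau ^ 2 * Rabs phi <= C ->
  Rabs phi <= 4 * C / t ^ 2.
Proof.
  intros Ht Htau H. assert (Htau2 : (t / 2) ^ 2 <= tau ^ 2) by (apply pow_incr; lra).
  apply (Rmult_le_reg_l ((t / 2) ^ 2)); [apply pow_lt; lra|].
  replace ((t / 2) ^ 2 * (4 * C / t ^ 2)) with C by (field; lra).
  pose proof (Rabs_pos phi). nra.
Qed.

Lemma f_th_taylor t h : 0 < t -> 0 < h <= t / 2 ->
  Rabs (f_th (t - h) - f_th t + h * (-2 * ln (s_of t)) - h ^ 2 / 2 * d2f (s_of t))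
  <= 400000 / t ^ 2 * h ^ 3.
Proof.
  intros Ht Hh.
  assert (H := taylor2_remainder_le f_th (fun t => -2 * ln (s_of t)) (fun t => d2f (s_of t))
                 (fun t => d3f (s_of t)) (t - h) t (400000 / t ^ 2) ltac:(lra)).
  replace (t - (t - h)) with h in H by ring. apply H; intros tau Htau.
  - apply is_derive_f_th. lra.
  - apply is_derive_ln_s_of. lra.
  - apply is_derive_d2f_s_of. lra.
  - replace (400000 / t ^ 2) with (4 * 100000 / t ^ 2) by (field; lra).
    apply (Rabs_le_on_half_interval _ t tau); [lra | lra |]. apply theta_derivative_bounds. lra.
Qed.

Lemma j_th_taylor t h : 0 < t -> 0 < h <= t / 2 ->
  Rabs (j_th (t - h) - j_th t + h * dj (s_of t)) <= 40000000 / t ^ 2 * h ^ 2.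
Proof.
  intros Ht Hh.
  assert (H := taylor1_remainder_le j_th (fun t => dj (s_of t)) (fun t => d2j (s_of t))
                 (t - h) t (40000000 / t ^ 2) ltac:(lra)).
  replace (t - (t - h)) with h in H by ring. apply H; intros tau Htau.
  - apply is_derive_j_th. lra.
  - apply is_derive_dj_s_of. lra.
  - replace (40000000 / t ^ 2) with (4 * 10000000 / t ^ 2) by (field; lra).
    apply (Rabs_le_on_half_interval _ t tau); [lra | lra |]. apply theta_derivative_bounds. lra.
Qed.

Lemma Rabs_exp_sub_1_sub_le_inv_sq a r G Ca Cr : 1 <= G -> 0 <= Ca -> 0 <= Cr ->
  Rabs a <= Ca / G -> Rabs r <= Cr / G ^ 2 ->
  Rabs (exp (a + r) - 1 - a) <= (exp (Ca + Cr) * (2 * Ca ^ 2 + 2 * Cr ^ 2) + Cr) / G ^ 2.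
Proof.
  intros HG HCa HCr Ha Hr.
  assert (HG1 : / G <= 1) by (rewrite <- Rinv_1; apply Rinv_le_contravar; lra).
  assert (HG2 : / G ^ 2 <= 1) by (rewrite <- Rinv_1; apply Rinv_le_contravar; nra).
  assert (Hz : Rabs (a + r) <= Ca + Cr).
  { eapply Rle_trans; [apply Rabs_triang|]. unfold Rdiv in Ha, Hr.
    assert (Ca * / G <= Ca) by nra. assert (Cr * / G ^ 2 <= Cr) by nra. lra. }
  assert (Hz2 : (a + r) ^ 2 <= (2 * Ca ^ 2 + 2 * Cr ^ 2) / G ^ 2).
  { assert (a ^ 2 <= Ca ^ 2 / G ^ 2).
    { rewrite <- pow2_abs. replace (Ca ^ 2 / G ^ 2) with ((Ca / G) ^ 2) by (field; lra).
      apply pow_incr. split; [apply Rabs_pos | exact Ha]. }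
    assert (r ^ 2 <= Cr ^ 2 / G ^ 2).
    { rewrite <- pow2_abs. apply Rle_trans with ((Cr / G ^ 2) ^ 2).
      - apply pow_incr. split; [apply Rabs_pos | exact Hr].
      - replace ((Cr / G ^ 2) ^ 2) with (Cr ^ 2 / G ^ 2 * / G ^ 2) by (field; lra).
        assert (0 <= Cr ^ 2 / G ^ 2) by (apply Rdiv_le_0_compat; nra). nra. }
    pose proof (pow2_ge_0 (a - r)).
    replace ((2 * Ca ^ 2 + 2 * Cr ^ 2) / G ^ 2) with (2 * (Ca ^ 2 / G ^ 2) + 2 * (Cr ^ 2 / G ^ 2))
      by (field; lra).
    nra. }
  replace (exp (a + r) - 1 - a) with ((exp (a + r) - 1 - (a + r)) + r) by ring.
  eapply Rle_trans; [apply Rabs_triang|].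
  replace ((exp (Ca + Cr) * (2 * Ca ^ 2 + 2 * Cr ^ 2) + Cr) / G ^ 2)
    with (exp (Ca + Cr) * ((2 * Ca ^ 2 + 2 * Cr ^ 2) / G ^ 2) + Cr / G ^ 2) by (field; lra).
  apply Rplus_le_compat; [|exact Hr].
  eapply Rle_trans; [apply Rabs_exp_sub_1_sub_le, Hz|].
  apply Rmult_le_compat_l; [apply Rlt_le, exp_pos | exact Hz2].
Qed.

Lemma Rabs_first_order_term_le N G : 0 < N -> 0 < G ->
  Rabs ((d2f (s_of (G / N)) / 2 - dj (s_of (G / N))) / N) <= 2001 / G.
Proof.
  intros HN HG. set (t := G / N). assert (Ht : 0 < t) by (apply Rdiv_lt_0_compat; lra).
  destruct (theta_derivative_bounds t Ht) as [B2f [Bj _]].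
  unfold Rdiv at 1. rewrite Rabs_mult, (Rabs_right (/ N)) by (apply Rle_ge, Rlt_le, Rinv_0_lt_compat; lra).
  replace (2001 / G) with (2001 / t * / N) by (unfold t; field; lra).
  apply Rmult_le_compat_r; [apply Rlt_le, Rinv_0_lt_compat; lra|].
  apply (Rmult_le_reg_l t); [exact Ht|]. replace (t * (2001 / t)) with 2001 by (field; lra).
  eapply Rle_trans; [apply Rmult_le_compat_l; [lra | apply Rabs_triang]|].
  rewrite Rabs_Ropp. unfold Rdiv. rewrite Rabs_mult, (Rabs_right (/ 2)) by lra. nra.
Qed.

Lemma exponent_remainder_le N G : 0 < N -> 2 <= G ->
  Rabs (stirling_log_ratio G + N * (f_th ((G - 1) / N) - f_th (G / N)) + (j_th ((G - 1) / N) - j_th (G / N))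
        - (2 * ln (s_of (G / N)) + (d2f (s_of (G / N)) / 2 - dj (s_of (G / N))) / N))
  <= 40400003 / G ^ 2.
Proof.
  intros HN HG. set (t := G / N). assert (Ht : 0 < t) by (apply Rdiv_lt_0_compat; lra).
  assert (Hh : 0 < / N <= t / 2).
  { split; [apply Rinv_0_lt_compat; lra|]. unfold t. apply (Rmult_le_reg_r N); [lra|].
    field_simplify; lra. }
  replace ((G - 1) / N) with (t - / N) by (unfold t; field; lra).
  pose proof (f_th_taylor t (/ N) Ht Hh) as Rf. pose proof (j_th_taylor t (/ N) Ht Hh) as Rj.
  pose proof (Rabs_stirling_ratio_le G HG) as Rs.
  replace (400000 / t ^ 2 * (/ N) ^ 3) with (400000 / G ^ 2 * / N) in Rf by (unfold t; field; lra).
  replace (40000000 / t ^ 2 * (/ N) ^ 2) with (40000000 / G ^ 2) in Rj by (unfold t; field; lra).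
  set (ef := f_th (t - / N) - f_th t + / N * (-2 * ln (s_of t)) - (/ N) ^ 2 / 2 * d2f (s_of t)) in *.
  set (ej := j_th (t - / N) - j_th t + / N * dj (s_of t)) in *.
  replace (stirling_log_ratio G + N * (f_th (t - / N) - f_th t) + (j_th (t - / N) - j_th t)
           - (2 * ln (s_of t) + (d2f (s_of t) / 2 - dj (s_of t)) / N))
    with (stirling_log_ratio G + N * ef + ej) by (unfold ef, ej; field; lra).
  assert (Rabs (N * ef) <= 400000 / G ^ 2).
  { rewrite Rabs_mult, (Rabs_right N) by lra.
    apply (Rmult_le_reg_r (/ N)); [apply Rinv_0_lt_compat; lra|].
    replace (N * Rabs ef * / N) with (Rabs ef) by (field; lra). exact Rf. }
  eapply Rle_trans; [apply Rabs_triang|]. eapply Rle_trans; [apply Rplus_le_compat_r, Rabs_triang|].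
  replace (40400003 / G ^ 2) with (3 / G ^ 2 + 400000 / G ^ 2 + 40000000 / G ^ 2) by (field; lra).
  lra.
Qed.

Lemma exp_2_ln s : 0 < s -> exp (2 * ln s) = s ^ 2.
Proof. intro Hs. replace (2 * ln s) with (ln s + ln s) by ring. rewrite exp_plus, exp_ln by exact Hs. ring. Qed.

Lemma beta_exponent_error : exists K, 0 < K /\ forall N G, 0 < N -> 2 <= G ->
  let t := G / N in
  Rabs (exp (stirling_log_ratio G + N * (f_th ((G - 1) / N) - f_th t) + (j_th ((G - 1) / N) - j_th t))
        - exp (- Derive f_th t)
        - exp (- Derive f_th t) / N * (Derive (Derive f_th) t / 2 - Derive j_th t))
  <= K * (s_of t ^ 2 / G ^ 2).
Proof.
  set (Ca := 2001). set (Cr := 40400003).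
  exists (exp (Ca + Cr) * (2 * Ca ^ 2 + 2 * Cr ^ 2) + Cr). split.
  { assert (0 < Cr) by (unfold Cr; lra).
    assert (0 <= exp (Ca + Cr) * (2 * Ca ^ 2 + 2 * Cr ^ 2))
      by (apply Rmult_le_pos; [apply Rlt_le, exp_pos | nra]).
    lra. }
  intros N G HN HG t. assert (Ht : 0 < t) by (apply Rdiv_lt_0_compat; lra).
  pose proof (Rabs_first_order_term_le N G HN ltac:(lra)) as Ha.
  pose proof (exponent_remainder_le N G HN HG) as Hr. fold t in Ha, Hr.
  rewrite Derive2_f_th, Derive_f_th, Derive_j_th by exact Ht.
  destruct (s_of_spec t Ht) as [Hs _]. set (s := s_of t) in *.
  set (a := (d2f s / 2 - dj s) / N) in *.
  set (r := stirling_log_ratio G + N * (f_th ((G - 1) / N) - f_th t) + (j_th ((G - 1) / N) - j_th t)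
            - (2 * ln s + a)) in *.
  replace (stirling_log_ratio G + N * (f_th ((G - 1) / N) - f_th t) + (j_th ((G - 1) / N) - j_th t))
    with (2 * ln s + (a + r)) by (unfold r; ring).
  replace (- (-2 * ln s)) with (2 * ln s) by ring. rewrite exp_plus, exp_2_ln by lra.
  replace (s ^ 2 * exp (a + r) - s ^ 2 - s ^ 2 / N * (d2f s / 2 - dj s))
    with (s ^ 2 * (exp (a + r) - 1 - a)) by (unfold a; field; lra).
  rewrite Rabs_mult, (Rabs_right (s ^ 2)) by (apply Rle_ge, pow2_ge_0).
  replace ((exp (Ca + Cr) * (2 * Ca ^ 2 + 2 * Cr ^ 2) + Cr) * (s ^ 2 / G ^ 2))
    with (s ^ 2 * ((exp (Ca + Cr) * (2 * Ca ^ 2 + 2 * Cr ^ 2) + Cr) / G ^ 2)) by (field; lra).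
  apply Rmult_le_compat_l; [apply pow2_ge_0|].
  apply Rabs_exp_sub_1_sub_le_inv_sq; unfold Ca, Cr; lra.
Qed.

Lemma Rpower_neg_4_3 x : 0 < x -> Rpower x (- (4 / 3)) = Rpower x (2 / 3) / x ^ 2.
Proof.
  intro Hx. replace (- (4 / 3)) with (2 / 3 + - INR 2) by (simpl; field).
  rewrite Rpower_plus, Rpower_Ropp, Rpower_pow by exact Hx. reflexivity.
Qed.

Lemma Rpower_2_3_ge_1 x : 1 <= x -> 1 <= Rpower x (2 / 3).
Proof. intro Hx. rewrite <- (Rpower_O x) by lra. apply Rle_Rpower; lra. Qed.

Lemma inv_sq_le_4_div_sq a x : 0 < x -> x <= 2 * a -> / a ^ 2 <= 4 / x ^ 2.
Proof.
  intros Hx Ha. replace (4 / x ^ 2) with (/ ((x / 2) ^ 2)) by (field; lra).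
  apply Rinv_le_contravar; [apply pow_lt; lra | apply pow_incr; lra].
Qed.

Lemma Rmin_div_sq_le N G : 1 <= N -> 1 <= G -> Rpower (N + G) (- (2 / 3)) <= G / N ->
  Rmin 1 (G / N) / G ^ 2 <= 4 * Rpower (N + G) (- (4 / 3)).
Proof.
  intros HN HG Hth. set (x := N + G) in *.
  pose proof (Rpower_2_3_ge_1 x ltac:(unfold x; lra)).
  rewrite Rpower_neg_4_3 by (unfold x; lra). rewrite Rpower_Ropp in Hth.
  set (P := Rpower x (2 / 3)) in *.
  assert (Hx : 0 < x) by (unfold x; lra). assert (Hx2 : 0 < x ^ 2) by (apply pow_lt; lra).
  destruct (Rle_or_lt G N) as [HGN | HNG].
  - rewrite Rmin_right by (apply (Rmult_le_reg_r N); [lra|]; field_simplify; lra).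
    assert (/ (G / N) <= P).
    { rewrite <- (Rinv_inv P). apply Rinv_le_contravar; [apply Rinv_0_lt_compat; lra | exact Hth]. }
    assert (/ N ^ 2 <= 4 / x ^ 2) by (apply inv_sq_le_4_div_sq; unfold x; lra).
    replace (G / N / G ^ 2) with (/ N ^ 2 * / (G / N)) by (field; lra).
    replace (4 * (P / x ^ 2)) with (4 / x ^ 2 * P) by (field; lra).
    apply Rmult_le_compat; try lra; apply Rlt_le, Rinv_0_lt_compat; [nra | apply Rdiv_lt_0_compat; lra].
  - rewrite Rmin_left by (apply (Rmult_le_reg_r N); [lra|]; field_simplify; lra).
    assert (/ G ^ 2 <= 4 / x ^ 2) by (apply inv_sq_le_4_div_sq; unfold x; lra).
    assert (4 / x ^ 2 <= 4 * (P / x ^ 2)).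
    { unfold Rdiv. assert (0 < / x ^ 2) by (apply Rinv_0_lt_compat; lra). nra. }
    unfold Rdiv at 1. rewrite Rmult_1_l. lra.
Qed.

Lemma admissible_g1_n_eq_2 n : (2 <= n)%nat ->
  Rpower (INR (n + 1)) (- (2 / 3)) <= INR 1 / INR n -> n = 2%nat.
Proof.
  intros Hn H. destruct (Nat.eq_dec n 2) as [| Hne]; [assumption | exfalso].
  assert (Hn3 : 3 <= INR n) by (replace 3 with (INR 3) by (simpl; ring); apply le_INR; lia).
  rewrite plus_INR, Rpower_Ropp in H. simpl INR in H at 2.
  set (P := Rpower (INR n + 1) (2 / 3)) in *.
  assert (HP : 1 <= P) by (apply Rpower_2_3_ge_1; lra).
  assert (HPn : INR n <= P).
  { rewrite <- (Rinv_inv P), <- (Rinv_inv (INR n)). apply Rinv_le_contravar; [apply Rinv_0_lt_compat; lra|].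
    rewrite Rdiv_1_l in H. exact H. }
  assert (HP3 : P ^ 3 = (INR n + 1) ^ 2).
  { unfold P. rewrite <- Rpower_pow by apply exp_pos. rewrite Rpower_mult.
    replace (2 / 3 * INR 3) with (INR 2) by (simpl; field). apply Rpower_pow. lra. }
  assert (INR n ^ 3 <= P ^ 3) by (apply pow_incr; lra).
  nra.
Qed.

Definition expansion_error (n g : nat) : R :=
  let theta := INR g / INR n in
  Rabs (beta n g - exp (- Derive f_th theta)
        - exp (- Derive f_th theta) / INR n * (Derive (Derive f_th) theta / 2 - Derive j_th theta)).

Lemma expansion_error_le : exists K, 0 < K /\ forall n k, (1 <= n)%nat ->
  let x := INR (n + S (S k)) in
  Rpower x (- (2 / 3)) <= INR (S (S k)) / INR n -> expansion_error n (S (S k)) <= K * Rpower x (- (4 / 3)).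
Proof.
  destruct beta_exponent_error as [K [HK Hbeta]].
  exists (12 * K). split; [lra|]. intros n k Hn x Hth.
  unfold expansion_error. rewrite beta_eq by exact Hn. unfold x in *. rewrite plus_INR in *.
  set (N := INR n) in *. set (G := INR (S (S k))) in *.
  assert (HN : 1 <= N) by (unfold N; replace 1 with (INR 1) by reflexivity; apply le_INR; lia).
  assert (HG : 2 <= G) by (unfold G; replace 2 with (INR 2) by (simpl; ring); apply le_INR; lia).
  eapply Rle_trans; [apply Hbeta; lra|].
  pose proof (s_of_sq_le (G / N) ltac:(apply Rdiv_lt_0_compat; lra)) as Hs2.
  pose proof (Rmin_div_sq_le N G HN ltac:(lra) Hth) as Hmin.
  replace (12 * K * Rpower (N + G) (- (4 / 3))) with (K * (3 * (4 * Rpower (N + G) (- (4 / 3))))) by ring.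
  apply Rmult_le_compat_l; [lra|].
  apply Rle_trans with (3 * Rmin 1 (G / N) / G ^ 2).
  - unfold Rdiv. apply Rmult_le_compat_r; [apply Rlt_le, Rinv_0_lt_compat; nra | exact Hs2].
  - unfold Rdiv in *. lra.
Qed.

Theorem lemma5 :
  exists C : R, 0 < C /\
    forall n g : nat, (2 <= n)%nat -> (1 <= g)%nat ->
      let theta := INR g / INR n in
      let x := INR (n + g) in
      Rpower x (- (2 / 3)) <= theta ->
      Rabs (beta n g - exp (- Derive f_th theta)
            - exp (- Derive f_th theta) / INR n
              * (Derive (Derive f_th) theta / 2 - Derive j_th theta))
      <= C * Rpower x (- (4 / 3)).
Proof.
  destruct expansion_error_le as [K [HK Hg2]].
  set (x3 := Rpower (INR (2 + 1)) (- (4 / 3))).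
  assert (Hx3 : 0 < x3) by apply exp_pos.
  assert (HE : 0 <= expansion_error 2 1) by apply Rabs_pos.
  exists (K + expansion_error 2 1 / x3). split; [pose proof (Rdiv_le_0_compat _ _ HE Hx3); lra|].
  intros n g Hn Hg theta x Hth.
  change (expansion_error n g <= (K + expansion_error 2 1 / x3) * Rpower x (- (4 / 3))).
  assert (Hx : 0 < Rpower x (- (4 / 3))) by apply exp_pos.
  destruct g as [| [| k]]; [lia | |].
  - assert (n = 2%nat) by (apply admissible_g1_n_eq_2; assumption). subst n.
    change (expansion_error 2 1 <= (K + expansion_error 2 1 / x3) * x3).
    replace ((K + expansion_error 2 1 / x3) * x3) with (K * x3 + expansion_error 2 1) by (field; lra).
    pose proof (Rmult_lt_0_compat _ _ HK Hx3). lra.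
  - pose proof (Hg2 n k ltac:(lia) Hth) as H. fold x in H.
    assert (0 <= expansion_error 2 1 / x3 * Rpower x (- (4 / 3)))
      by (apply Rmult_le_pos; [apply Rdiv_le_0_compat|]; lra).
    lra.
Qed.
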